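(* Let $A\in\mathfrak{so}(q_1)^p$ and $B\in\mathfrak{so}(q_2)^p$ each have linearly independent components. Suppose each of them is a distinguished point for $SL(q_i,\mathbb R)\times SL(p,\mathbb R)$ (with $q_1$, $q_2$ respectively) and is $SL(p,\mathbb R)$-minimal. Then there exists $c>0$ such that the concatenation $C=A+_c(cB)\in\mathfrak{so}(q_1+q_2)^p$ is a distinguished point for $SL(q_1+q_2,\mathbb R)\times SL(p,\mathbb R)$ and is $SL(p,\mathbb R)$-minimal. Consequently $\mathbb R^{p+q_1+q_2}(C)$ with its standard inner product is a nilsoliton.
   Context: $\mathfrak{so}(q)$ denotes the real skew-symmetric $q\times q$ matrices, with inner product $\langle X,Y\rangle=\mathrm{tr}(XY^T)$. The group $GL(q,\mathbb R)\times GL(p,\mathbb R)$ acts on $\mathfrak{so}(q)^p$ by $(g,h)\cdot(C_1,\dots,C_p)=(C'_1,\dots,C'_p)$ with $C'_k=\sum_i h_{ki}\,gC_ig^T$. The Lie algebra action of $(X,Y)$ is $\big((X,Y)\cdot C\big)_k=XC_k+C_kX^T+\sum_iY_{ki}C_i$. Moment maps: $m_1(C)=-2\sum_iC_i^2$ and $m_2(C)=[\mathrm{tr}(C_iC_j^T)]_{ij}$. Their traceless parts $m_1^0$, $m_2^0$ are the $SL$ moment maps. $C$ is distinguished for $SL(q)\times SL(p)$ if $(m_1^0(C),m_2^0(C))\cdot C=rC$ for some $r\in\mathbb R$. $C$ is $SL(p)$-minimal if $m_2^0(C)=0$. Concatenation: for $A\in\mathfrak{so}(q_1)^p$ and $B\in\mathfrak{so}(q_2)^p$,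 $A+_cB\in\mathfrak{so}(q_1+q_2)^p$ has $k$-th component the block-diagonal matrix $\mathrm{diag}(A_k,B_k)$. For $C\in\mathfrak{so}(q)^p$ with linearly independent components, $\mathbb R^{p+q}(C)$ is the two-step nilpotent Lie algebra on $\mathbb R^{q+p}$ with $[e_i,e_j]=\sum_k(C_k)_{ij}e_{q+k}$ for $i,j\le q$ and all other brackets of basis vectors zero. Its standard inner product makes $\{e_i\}$ orthonormal. A nilsoliton is an inner product whose Ricci operator equals $\lambda\mathrm{Id}+D$ for some $\lambda\in\mathbb R$ and some symmetric derivation $D$. *)

From HB Require Import structures.
From mathcomp Require Import all_boot all_order all_algebra.
Set Implicit Arguments. Unset Strict Implicit. Unset Printing Implicit Defensive.
Import Order.TTheory GRing.Theory Num.Theory.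
Local Open Scope ring_scope.

Section Defs.
Variable R : rcfType.

(* An element of so(q)^p : a p-tuple of q x q matrices. *)
Definition tup (q p : nat) := 'I_p -> 'M[R]_q.

Definition skew (q : nat) (X : 'M[R]_q) := X^T = - X.
Definition is_so_tuple (q p : nat) (C : tup q p) := forall k, skew (C k).

Definition lin_indep (q p : nat) (C : tup q p) :=
  forall a : 'I_p -> R, \sum_(k < p) a k *: C k = 0 -> forall k, a k = 0.

Definition m1 (q p : nat) (C : tup q p) : 'M[R]_q :=
  - 2%:R *: \sum_(i < p) (C i *m C i).
Definition m2 (q p : nat) (C : tup q p) : 'M[R]_p :=
  \matrix_(i, j) \tr (C i *m (C j)^T).

Definition traceless (n : nat) (M : 'M[R]_n) : 'M[R]_n :=
  M - (\tr M / n%:R) *: 1%:M.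

Definition m1_0 q p (C : tup q p) := traceless (m1 C).
Definition m2_0 q p (C : tup q p) := traceless (m2 C).

Definition lie_act q p (X : 'M[R]_q) (Y : 'M[R]_p) (C : tup q p) : tup q p :=
  fun k => X *m C k + C k *m X^T + \sum_(i < p) Y k i *: C i.

Definition scale_tup q p (c : R) (C : tup q p) : tup q p := fun k => c *: C k.

Definition distinguished q p (C : tup q p) :=
  exists r : R, lie_act (m1_0 C) (m2_0 C) C = scale_tup r C.

Definition SLp_minimal q p (C : tup q p) := m2_0 C = 0.

Definition concat q1 q2 p (A : tup q1 p) (B : tup q2 p) : tup (q1 + q2) p :=
  fun k => block_mx (A k) 0 0 (B k).

(* Structure constants of R^{q+p}(C) in the basis e_0..e_{q+p-1}:
   [e_i, e_j] = \sum_l sc C i j l e_l. *)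
Definition sc q p (C : tup q p) (i j l : 'I_(q + p)) : R :=
  match split i, split j, split l with
  | inl a, inl b, inr k => C k a b
  | _, _, _ => 0
  end.

(* A metric Lie algebra on R^n given by structure constants w.r.t. an
   orthonormal basis (standard inner product); vectors are columns. *)
Definition ebasis n (i : 'I_n) : 'cV[R]_n := delta_mx i 0.

Definition bracket n (c : 'I_n -> 'I_n -> 'I_n -> R) (x y : 'cV[R]_n) : 'cV[R]_n :=
  \col_l \sum_(i < n) \sum_(j < n) x i 0 * y j 0 * c i j l.

(* matrix of ad_x : column j is [x, e_j] *)
Definition adm n (c : 'I_n -> 'I_n -> 'I_n -> R) (x : 'cV[R]_n) : 'M[R]_n :=
  \matrix_(l, j) \sum_(i < n) x i 0 * c i j l.

(* Ricci operator of a left-invariant metric (standard formula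
   Ric = M - 1/2 B - S(ad H), cf. Besse 7.38 / Lauret):
   <M x,y> = -1/2 sum <[x,e_i],e_j><[y,e_i],e_j> + 1/4 sum <[e_i,e_j],x><[e_i,e_j],y>,
   B = Killing form, <H,x> = tr ad x, S(T) = (T + T^T)/2. *)
Definition ricci n (c : 'I_n -> 'I_n -> 'I_n -> R) : 'M[R]_n :=
  let Mm := \matrix_(a, b)
     (- (1 / 2%:R) * \sum_(i < n) \sum_(j < n) c a i j * c b i j
      + (1 / 4%:R) * \sum_(i < n) \sum_(j < n) c i j a * c i j b) in
  let Kil := \matrix_(a, b) \tr (adm c (ebasis a) *m adm c (ebasis b)) in
  let H := \col_(a < n) \tr (adm c (ebasis a)) in
  Mm - (1 / 2%:R) *: Kil - (1 / 2%:R) *: (adm c H + (adm c H)^T).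

Definition derivation n (c : 'I_n -> 'I_n -> 'I_n -> R) (D : 'M[R]_n) :=
  forall x y : 'cV[R]_n,
    D *m bracket c x y = bracket c (D *m x) y + bracket c x (D *m y).

Definition nilsoliton n (c : 'I_n -> 'I_n -> 'I_n -> R) :=
  exists (lam : R) (D : 'M[R]_n),
    D^T = D /\ derivation c D /\ ricci c = lam%:M + D.

End Defs.

(* Call an so-tuple C "balanced with constants (s, mu)" when
     m1(C) C_k + C_k m1(C) = s C_k   for every k,   and   m2(C) = mu I.
   Since m1(C) is symmetric, a balanced tuple is distinguished for
   SL(q) x SL(p) and SL(p)-minimal; conversely a distinguished SL(p)-minimal
   tuple is balanced, and when its components are linearly independent its
   constant s is positive (pair the defining identity with C_k and sum:
   s |C|^2 = |m1(C)|^2, while tr m1(C) = 2|C|^2 > 0).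
   Balancedness is stable under concatenation (for a common s, with
   mu = muA + muB) and under scaling B -> cB (s and mu get multiplied by c^2),
   so c = sqrt(sA / sB) makes A +_c (cB) balanced.
   Finally, for a balanced tuple C the Ricci operator of R^{q+p}(C) is the
   block matrix diag(-m1(C)/4, m2(C)/4), which is lambda Id plus a symmetric
   derivation of the form diag(D1, b Id): R^{q+p}(C) is a nilsoliton. *)

From HB Require Import structures.
From mathcomp Require Import all_boot all_order all_algebra ring.
From Stdlib Require Import FunctionalExtensionality.
Import Order.TTheory GRing.Theory Num.Theory.
Local Open Scope ring_scope.
Set Implicit Arguments. Unset Strict Implicit.

Definition sqnorm (R : rcfType) n (X : 'M[R]_n) : R := \tr (X *m X^T).

Definition balanced (R : rcfType) q p (C : tup R q p) (s mu : R) :=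
  (forall k, m1 C *m C k + C k *m m1 C = s *: C k) /\ m2 C = mu%:M.

Section SquaredNorm.
Variable R : rcfType.

Lemma sqnormE n (X : 'M[R]_n) : sqnorm X = \sum_i \sum_j X i j ^+ 2.
Proof.
apply: eq_bigr => i _; rewrite mxE.
by apply: eq_bigr => j _; rewrite mxE expr2.
Qed.

Lemma sqnorm_ge0 n (X : 'M[R]_n) : 0 <= sqnorm X.
Proof.
by rewrite sqnormE; apply: sumr_ge0 => i _; apply: sumr_ge0 => j _; exact: sqr_ge0.
Qed.

Lemma sqnorm_eq0 n (X : 'M[R]_n) : sqnorm X = 0 -> X = 0.
Proof.
rewrite sqnormE => X0; apply/matrixP => i j; rewrite mxE.
have row_ge0 i' : true -> 0 <= \sum_j X i' j ^+ 2.
  by move=> _; apply: sumr_ge0 => j' _; exact: sqr_ge0.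
have Xi0 := psumr_eq0P row_ge0 X0 isT.
have Xij0 := psumr_eq0P (fun j' (_ : true) => sqr_ge0 (X i j')) (Xi0 i) isT.
by apply/eqP; rewrite -sqrf_eq0 (Xij0 j).
Qed.

End SquaredNorm.

Lemma trace_anticomm_skew (R : rcfType) n (M a : 'M[R]_n) : a^T = - a ->
  \tr ((M *m a + a *m M) *m a^T) = \tr (M *m (- 2%:R *: (a *m a))).
Proof.
move=> skew_a; rewrite skew_a mulmxDl mxtraceD.
rewrite (mxtrace_mulC (a *m M) (- a)) mulmxA (mxtrace_mulC (- a *m a) M).
rewrite -(mulmxA M a (- a)) scaleNr scaler_nat mulr2n.
by rewrite mulmxN mulNmx opprD mulmxDr mxtraceD.
Qed.

Lemma addrBB (V : zmodType) (x y z : V) : x - z + (y - z) = x + y - (z + z).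
Proof. by rewrite opprD !addrA [x - z + y]addrAC. Qed.

Section Balanced.
Variables (R : rcfType) (q p : nat) (C : tup R q p).
Hypothesis skewC : is_so_tuple C.

Let t := \tr (m1 C) / q%:R.

Lemma m1_sym : (m1 C)^T = m1 C.
Proof.
rewrite /m1 linearZ linear_sum /=; congr (_ *: _).
apply: eq_bigr => k _; rewrite trmx_mul.
by rewrite (skewC k : (C k)^T = - C k) mulmxN mulNmx opprK.
Qed.

Lemma lie_act_minimal k : SLp_minimal C ->
  lie_act (m1_0 C) (m2_0 C) C k = m1 C *m C k + C k *m m1 C - (t + t) *: C k.
Proof.
move=> minC; rewrite /lie_act big1 ?addr0; last first.
  by move=> i _; rewrite minC mxE scale0r.
rewrite /m1_0 /traceless scalemx1 linearB /= tr_scalar_mx m1_sym.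
by rewrite mulmxBl mulmxBr mul_scalar_mx mul_mx_scalar addrBB scalerDl.
Qed.

Lemma scalar_m2_minimal mu : m2 C = mu%:M -> SLp_minimal C.
Proof.
move=> m2C; rewrite /SLp_minimal /m2_0 /traceless m2C mxtrace_scalar.
case: (posnP p) => [p0|p_gt0].
  by apply/matrixP => i; have := ltn_ord i; rewrite {2}p0.
by rewrite -[mu *+ p]mulr_natr mulfK ?pnatr_eq0 -?lt0n // scalemx1 subrr.
Qed.

Lemma balanced_distinguished s mu : balanced C s mu ->
  distinguished C /\ SLp_minimal C.
Proof.
move=> [eqC m2C]; have minC := scalar_m2_minimal m2C.
split=> //; exists (s - (t + t)); apply: functional_extensionality => k.
by rewrite lie_act_minimal // eqC /scale_tup scalerBl.
Qed.

Lemma distinguished_balanced : distinguished C -> SLp_minimal C ->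
  exists s mu, balanced C s mu.
Proof.
move=> [r actC] minC; exists (r + (t + t)), (\tr (m2 C) / p%:R); split.
  move=> k; have := congr1 (fun f => f k) actC.
  rewrite lie_act_minimal // => /eqP; rewrite subr_eq => /eqP ->.
  by rewrite /scale_tup !scalerDl.
move: minC; rewrite /SLp_minimal /m2_0 /traceless scalemx1.
by move/eqP; rewrite subr_eq0 => /eqP.
Qed.

Let normC := \sum_k sqnorm (C k).

Lemma trace_m1 : \tr (m1 C) = 2%:R * normC.
Proof.
rewrite /m1 mxtraceZ raddf_sum /normC mulNr -mulrN -sumrN; congr (_ * _).
by apply: eq_bigr => k _; rewrite /sqnorm (skewC k : (C k)^T = _) mulmxN raddfN.
Qed.

(* Pairing the balancing identity with C_k and summing over k. *)
Lemma balanced_sqnorm s : (forall k, m1 C *m C k + C k *m m1 C = s *: C k) ->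
  s * normC = sqnorm (m1 C).
Proof.
move=> eqC; rewrite /normC mulr_sumr.
under eq_bigr => k _ do
  rewrite /sqnorm -mxtraceZ scalemxAl -eqC trace_anticomm_skew ?(skewC k) //.
by rewrite -raddf_sum /= -mulmx_sumr -scaler_sumr /sqnorm m1_sym.
Qed.

(* With linearly independent components the balancing constant is positive:
   |C|^2 > 0, so m1(C) != 0 (its trace is 2|C|^2) and s |C|^2 = |m1(C)|^2 > 0. *)
Lemma balanced_s_gt0 s mu : lin_indep C -> (0 < p)%N -> balanced C s mu -> 0 < s.
Proof.
move=> indepC p_gt0 [eqC _].
have normC_gt0 : 0 < normC.
  rewrite lt0r sumr_ge0 ?andbT => [|k _]; last exact: sqnorm_ge0.
  apply/eqP => /psumr_eq0P C0.
  have Ck0 k : C k = 0 by apply: sqnorm_eq0; apply: C0 => // j _; exact: sqnorm_ge0.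
  have /indepC/(_ (Ordinal p_gt0))/eqP : \sum_k (fun _ => 1) k *: C k = 0.
    by apply: big1 => k _; rewrite Ck0 scaler0.
  by rewrite oner_eq0.
have m1_neq0 : m1 C != 0.
  apply: contraTneq normC_gt0 => m10.
  have := trace_m1; rewrite m10 mxtrace0 => /esym/eqP.
  by rewrite mulf_eq0 pnatr_eq0 /= => /eqP ->; rewrite ltxx.
have : 0 < s * normC.
  rewrite balanced_sqnorm // lt0r sqnorm_ge0 andbT.
  by apply: contra m1_neq0 => /eqP /sqnorm_eq0 ->.
by rewrite pmulr_lgt0.
Qed.

Lemma distinguished_balanced_pos : lin_indep C -> distinguished C ->
  SLp_minimal C -> exists s mu, 0 < s /\ balanced C s mu.
Proof.
move=> indepC distC minC; case: (posnP p) => [p0|p_gt0].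
  exists 1, 0; split; first exact: ltr01.
  split=> [k|]; first by have := ltn_ord k; rewrite {2}p0.
  by apply/matrixP => i; have := ltn_ord i; rewrite {2}p0.
have [s [mu balC]] := distinguished_balanced distC minC.
by exists s, mu; split; first exact: balanced_s_gt0 balC.
Qed.

End Balanced.

Lemma split_lshift m n (i : 'I_m) : split (lshift n i) = inl i.
Proof. exact: (unsplitK (inl i)). Qed.

Lemma split_rshift m n (i : 'I_n) : split (rshift m i) = inr i.
Proof. exact: (unsplitK (inr i)). Qed.

Lemma sum2_eq0 (V : nmodType) (I J : finType) (F : I -> J -> V) :
  (forall x y, F x y = 0) -> \sum_x \sum_y F x y = 0.
Proof. by move=> F0; apply: big1 => x _; apply: big1 => y _; exact: F0. Qed.

Lemma adm0 (R : rcfType) n (c : 'I_n -> 'I_n -> 'I_n -> R) : adm c 0 = 0.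
Proof.
by apply/matrixP => a b; rewrite !mxE big1 // => i _; rewrite mxE mul0r.
Qed.

Section TwoStep.
Variables (R : rcfType) (q p : nat) (C : tup R q p).

(* R^{q+p}(C) = V + Z with V = span(e_0..e_{q-1}), Z = span(e_q..e_{q+p-1}):
   the only nonzero structure constants are [V, V] -> Z, given by C. *)
Lemma sc_VV a b k : sc C (lshift p a) (lshift p b) (rshift q k) = C k a b.
Proof. by rewrite /sc !split_lshift split_rshift. Qed.

Lemma sc_to_V i j a : sc C i j (lshift p a) = 0.
Proof. by rewrite /sc split_lshift; case: (split i); case: (split j). Qed.

Lemma sc_Zl i j k : sc C (rshift q k) i j = 0.
Proof. by rewrite /sc split_rshift. Qed.

Lemma sc_Zr i j k : sc C i (rshift q k) j = 0.
Proof. by rewrite /sc split_rshift; case: (split i). Qed.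

Lemma adm_ebasis (a : 'I_(q + p)) :
  adm (sc C) (ebasis R a) = \matrix_(l, j) sc C a j l.
Proof.
apply/matrixP => l j; rewrite !mxE (bigD1 a) //= big1 ?addr0.
  by rewrite /ebasis mxE !eqxx mul1r.
by move=> i /negbTE ne_ia; rewrite /ebasis mxE ne_ia mul0r.
Qed.

(* Every ad_x maps V into Z and Z to 0, so the Killing form vanishes. *)
Lemma killing_sc :
  (\matrix_(a, b) \tr (adm (sc C) (ebasis R a) *m adm (sc C) (ebasis R b))
    : 'M_(q + p)) = 0.
Proof.
apply/matrixP => a b; rewrite !mxE !adm_ebasis /mxtrace big1 // => l _.
rewrite mxE big1 // => j _; rewrite !mxE.
by case: (split_ordP l) => [l' ->|k ->]; rewrite ?sc_to_V ?mul0r ?sc_Zr ?mulr0.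
Qed.

(* Likewise tr ad_x = 0: the mean curvature vector H vanishes. *)
Lemma mean_curvature_sc :
  (\col_(a < q + p) \tr (adm (sc C) (ebasis R a))) = 0.
Proof.
apply/matrixP => a b; rewrite !mxE adm_ebasis /mxtrace big1 // => l _.
by rewrite mxE; case: (split_ordP l) => [l' ->|k ->]; rewrite ?sc_to_V ?sc_Zr.
Qed.

Lemma bracket_sqsum_V i i' :
  \sum_x \sum_y sc C (lshift p i) x y * sc C (lshift p i') x y
  = \sum_a \sum_k C k i a * C k i' a.
Proof.
rewrite big_split_ord /= [X in _ + X]sum2_eq0 ?addr0 => [|x y]; last first.
  by rewrite sc_Zr mul0r.
apply: eq_bigr => a _; rewrite big_split_ord /= big1 ?add0r => [|y _].
  by apply: eq_bigr => k _; rewrite !sc_VV.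
by rewrite sc_to_V mul0r.
Qed.

Lemma bracket_sqsum_Z k k' :
  \sum_x \sum_y sc C x y (rshift q k) * sc C x y (rshift q k')
  = \sum_a \sum_b C k a b * C k' a b.
Proof.
rewrite big_split_ord /= [X in _ + X]sum2_eq0 ?addr0 => [|x y]; last first.
  by rewrite sc_Zl mul0r.
apply: eq_bigr => a _; rewrite big_split_ord /= [X in _ + X]big1 ?addr0 => [|y _].
  by apply: eq_bigr => b _; rewrite !sc_VV.
by rewrite sc_Zr mul0r.
Qed.

Hypothesis skewC : is_so_tuple C.

Lemma skew_entry k a b : C k a b = - C k b a.
Proof.
by have := congr1 (fun M : 'M[R]_q => M b a) (skewC k : (C k)^T = - C k); rewrite !mxE.
Qed.

Lemma m1E i i' : m1 C i i' = 2%:R * \sum_a \sum_k C k i a * C k i' a.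
Proof.
rewrite /m1 !mxE summxE mulNr -mulrN -sumrN exchange_big /=; congr (_ * _).
apply: eq_bigr => k _; rewrite mxE -sumrN; apply: eq_bigr => a _.
by rewrite [C k a i']skew_entry mulrN opprK.
Qed.

Lemma m2E k k' : m2 C k k' = \sum_a \sum_b C k a b * C k' a b.
Proof.
rewrite mxE; apply: eq_bigr => a _; rewrite mxE.
by apply: eq_bigr => b _; rewrite mxE.
Qed.

Lemma ricci_sc :
  ricci (sc C) = block_mx (- 4%:R^-1 *: m1 C) 0 0 (4%:R^-1 *: m2 C).
Proof.
rewrite /ricci /= killing_sc mean_curvature_sc adm0 trmx0 !addr0 scaler0 !subr0.
apply/matrixP => a b.
case: (split_ordP a) => [i ->|k ->]; case: (split_ordP b) => [i' ->|k' ->].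
- rewrite block_mxEul [LHS]mxE [RHS]mxE [X in _ + _ * X]sum2_eq0 => [|x y].
    by rewrite bracket_sqsum_V m1E; field.
  by rewrite sc_to_V mul0r.
- rewrite block_mxEur !mxE !sum2_eq0 ?mulr0 ?addr0 // => x y.
  + by rewrite sc_to_V mul0r.
  + by rewrite sc_Zl mulr0.
- rewrite block_mxEdl !mxE !sum2_eq0 ?mulr0 ?addr0 // => x y.
  + by rewrite sc_to_V mulr0.
  + by rewrite sc_Zl mul0r.
- rewrite block_mxEdr [LHS]mxE [RHS]mxE [X in _ * X + _]sum2_eq0 => [|x y].
    by rewrite bracket_sqsum_Z m2E; field.
  by rewrite sc_Zl mul0r.
Qed.

Lemma bracket_sc (x y : 'cV[R]_(q + p)) :
  bracket (sc C) x y =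
  col_mx 0 (\col_k (((usubmx x)^T *m C k *m usubmx y) 0 0)).
Proof.
apply/matrixP => l j; rewrite mxE.
case: (split_ordP l) => [l' ->|k ->].
  by rewrite col_mxEu mxE sum2_eq0 // => a b; rewrite sc_to_V mulr0.
rewrite col_mxEd !mxE big_split_ord /= [X in _ + X]sum2_eq0 ?addr0 => [|a b];
  last by rewrite sc_Zl mulr0.
rewrite exchange_big /= big_split_ord /= [X in _ + X]big1 ?addr0 => [|b _];
  last by apply: big1 => a _; rewrite sc_Zr mulr0.
apply: eq_bigr => b _; rewrite mxE mulr_suml; apply: eq_bigr => a _.
by rewrite sc_VV !mxE mulrAC.
Qed.

Lemma block_diag_mulmx (D1 : 'M[R]_q) b (z : 'cV[R]_(q + p)) :
  block_mx D1 0 0 b%:M *m z = col_mx (D1 *m usubmx z) (b *: dsubmx z).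
Proof.
by rewrite -{1}[z]vsubmxK mul_block_col !mul0mx addr0 add0r mul_scalar_mx.
Qed.

Lemma derivation_block (D1 : 'M[R]_q) b : D1^T = D1 ->
  (forall k, D1 *m C k + C k *m D1 = b *: C k) ->
  derivation (sc C) (block_mx D1 0 0 b%:M).
Proof.
move=> D1_sym D1C x y; rewrite !bracket_sc !block_diag_mulmx !col_mxKu col_mxKd.
rewrite mulmx0 add_col_mx addr0; congr col_mx; apply/matrixP => k j.
set u := usubmx x; set v := usubmx y.
have : (D1 *m u)^T *m C k *m v + u^T *m C k *m (D1 *m v) = b *: (u^T *m C k *m v).
  by rewrite scalemxAl scalemxAr -D1C trmx_mul D1_sym mulmxDr mulmxDl !mulmxA.
by move/(congr1 (fun M : 'M[R]_1 => M 0 0)); rewrite !mxE.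
Qed.

(* A balanced tuple gives a nilsoliton: Ric = lambda Id + diag(D1, b Id)
   with D1 = -m1(C)/4 - lambda Id, b = mu/4 - lambda, lambda = -(s + mu)/4. *)
Lemma nilsoliton_balanced s mu : balanced C s mu -> nilsoliton (sc C).
Proof.
move=> [eqC m2C].
pose lam := - (4%:R^-1 * s) - 4%:R^-1 * mu.
pose D1 := - 4%:R^-1 *: m1 C - lam%:M.
pose b := 4%:R^-1 * mu - lam.
have D1_sym : D1^T = D1 by rewrite linearB linearZ /= m1_sym // tr_scalar_mx.
exists lam, (block_mx D1 0 0 b%:M); split; [|split].
- by rewrite tr_block_mx !trmx0 tr_scalar_mx D1_sym.
- apply: derivation_block => // k.
  rewrite mulmxBl mulmxBr mul_scalar_mx mul_mx_scalar -scalemxAl -scalemxAr.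
  rewrite addrBB -scalerDr eqC scalerA -scalerDl -scalerBl.
  by congr (_ *: _); rewrite /b /lam; field.
- rewrite ricci_sc m2C (scalar_mx_block _ _ lam) add_block_mx !addr0.
  by rewrite scale_scalar_mx /D1 /b -raddfD /= !subrKC.
Qed.

End TwoStep.

Section Concatenation.
Variables (R : rcfType) (q1 q2 p : nat) (A : tup R q1 p) (B : tup R q2 p).

Lemma skew_concat : is_so_tuple A -> is_so_tuple B -> is_so_tuple (concat A B).
Proof.
move=> skewA skewB k; red; rewrite /concat tr_block_mx !trmx0.
by rewrite (skewA k : (A k)^T = _) (skewB k : (B k)^T = _) opp_block_mx !oppr0.
Qed.

Lemma sum_block_diag (f : 'I_p -> 'M[R]_q1) (g : 'I_p -> 'M[R]_q2) :
  \sum_i block_mx (f i) 0 0 (g i) = block_mx (\sum_i f i) 0 0 (\sum_i g i).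
Proof.
apply: (big_rec3 (fun x y z => x = block_mx y 0 0 z)); first by rewrite block_mx0.
by move=> i x y z _ ->; rewrite add_block_mx !addr0.
Qed.

Lemma m1_concat : m1 (concat A B) = block_mx (m1 A) 0 0 (m1 B).
Proof.
rewrite /m1 /concat.
under eq_bigr do rewrite mulmx_block !mulmx0 !mul0mx !addr0 add0r.
by rewrite sum_block_diag scale_block_mx !scaler0.
Qed.

Lemma m2_concat : m2 (concat A B) = m2 A + m2 B.
Proof.
apply/matrixP => i j; rewrite !mxE /concat tr_block_mx !trmx0 mulmx_block.
by rewrite mxtrace_block !mulmx0 addr0 add0r.
Qed.

Lemma balanced_concat s muA muB : balanced A s muA -> balanced B s muB ->
  balanced (concat A B) s (muA + muB).
Proof.
move=> [eqA m2A] [eqB m2B]; split; last by rewrite m2_concat m2A m2B raddfD.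
move=> k; rewrite m1_concat /concat !mulmx_block !mulmx0 !mul0mx !addr0 !add0r.
by rewrite add_block_mx eqA eqB !addr0 scale_block_mx !scaler0.
Qed.

End Concatenation.

Section Scaling.
Variables (R : rcfType) (q p : nat) (B : tup R q p) (c : R).

Lemma skew_scale : is_so_tuple B -> is_so_tuple (scale_tup c B).
Proof.
by move=> skewB k; red; rewrite /scale_tup linearZ /= (skewB k : (B k)^T = _) scalerN.
Qed.

Lemma scale_mulmx n (X Y : 'M[R]_n) (a b : R) :
  (a *: X) *m (b *: Y) = (a * b) *: (X *m Y).
Proof. by rewrite -scalemxAl -scalemxAr scalerA. Qed.

Lemma m1_scale : m1 (scale_tup c B) = (c * c) *: m1 B.
Proof.
rewrite /m1 /scale_tup [RHS]scalerA [c * c * _]mulrC -[RHS]scalerA [in RHS]scaler_sumr.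
congr (_ *: _); apply: eq_bigr => i _; exact: scale_mulmx.
Qed.

Lemma m2_scale : m2 (scale_tup c B) = (c * c) *: m2 B.
Proof.
apply/matrixP => i j; rewrite !mxE /scale_tup linearZ /= scale_mulmx.
by rewrite mxtraceZ.
Qed.

Lemma balanced_scale s mu : balanced B s mu ->
  balanced (scale_tup c B) (c * c * s) (c * c * mu).
Proof.
move=> [eqB m2B]; split; last by rewrite m2_scale m2B scale_scalar_mx.
move=> k; rewrite m1_scale /scale_tup !scale_mulmx -mulrA -scalerDr eqB.
by rewrite !scalerA; congr (_ *: _); ring.
Qed.

End Scaling.

Lemma balanced_soliton (R : rcfType) q p (C : tup R q p) s mu :
  is_so_tuple C -> balanced C s mu ->
  distinguished C /\ SLp_minimal C /\ nilsoliton (sc C).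
Proof.
move=> skewC balC; have [distC minC] := balanced_distinguished skewC balC.
by do 2!split=> //; apply: (nilsoliton_balanced skewC balC).
Qed.

Unset Implicit Arguments.

Theorem mainTheorem2 (R : rcfType) (p q1 q2 : nat)
  (A : tup R q1 p) (B : tup R q2 p) :
  is_so_tuple A -> is_so_tuple B ->
  lin_indep A -> lin_indep B ->
  distinguished A -> SLp_minimal A ->
  distinguished B -> SLp_minimal B ->
  exists c : R, 0 < c /\
    let C := concat A (scale_tup c B) in
    distinguished C /\ SLp_minimal C /\ nilsoliton (sc C).
Proof.
move=> skewA skewB indepA indepB distA minA distB minB.
have [sA [muA [sA_gt0 balA]]] := distinguished_balanced_pos skewA indepA distA minA.
have [sB [muB [sB_gt0 balB]]] := distinguished_balanced_pos skewB indepB distB minB.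
(* Rescale B so that its balancing constant becomes sA. *)
pose c := Num.sqrt (sA / sB).
have c_gt0 : 0 < c by rewrite sqrtr_gt0 divr_gt0.
have ccsB : c * c * sB = sA.
  by rewrite -expr2 sqr_sqrtr ?divfK ?gt_eqF // ltW // divr_gt0.
exists c; split=> // C.
apply: (balanced_soliton (s := sA) (mu := muA + c * c * muB)).
  exact: skew_concat skewA (skew_scale c skewB).
by apply: balanced_concat balA _; rewrite -ccsB; exact: balanced_scale.
Qed.
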